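(* Let $\phi(x,z)$ be an associate of the additive formal group, $V$ a nonlocal vertex algebra and $(W,Y_W)$ a $\phi$-coordinated quasi $V$-module. Let $u,v\in V$ and suppose $q(x_1,x_2)\in\mathbb{C}[[x_1,x_2]]$ satisfies $q(x_1,x_2)Y_W(u,x_1)Y_W(v,x_2)\in\mathrm{Hom}(W,W((x_1,x_2)))$. Then $$q(\phi(x_2,x_0),x_2)Y_W(Y(u,x_0)v,x_2)=\big(q(x_1,x_2)Y_W(u,x_1)Y_W(v,x_2)\big)|_{x_1=\phi(x_2,x_0)}.$$
   Context: An associate is $\phi(x,z)\in\mathbb{C}((x))[[z]]$ with $\phi(x,0)=x$ and $\phi(\phi(x,x_2),x_0)=\phi(x,x_0+x_2)$. Substitutions $x_1=\phi(x_2,x_0)$ into power series in $x_1,x_2$ or into elements of $\mathrm{Hom}(W,W((x_1,x_2)))$ give elements of $\mathbb{C}((x_2))[[x_0]]$ resp. $\mathrm{Hom}(W,W((x_2)))[[x_0]]$. A nonlocal vertex algebra: $(V,Y,\mathbf1)$ with $Y:V\to\mathrm{Hom}(V,V((x)))$, $Y(\mathbf1,x)=1$, $Y(v,x)\mathbf1\in V[[x]]$ with constant term $v$, and for $u,v,w$ some $l$ with $(x_0+x_2)^lY(u,x_0+x_2)Y(v,x_2)w=(x_0+x_2)^lY(Y(u,x_0)v,x_2)w$. A $\phi$-coordinated quasi $V$-module: $W$ with $Y_W:V\to\mathrm{Hom}(W,W((x)))$, $Y_W(\mathbf1,x)=1_W$, such that for $u,v\in V$ there exists $p(x,y)\in\mathbb{C}[[x,y]]$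 with $p(\phi(x,z),x)\ne0$, $p(x_1,x_2)Y_W(u,x_1)Y_W(v,x_2)\in\mathrm{Hom}(W,W((x_1,x_2)))$ and $p(\phi(x_2,x_0),x_2)Y_W(Y(u,x_0)v,x_2)=(p(x_1,x_2)Y_W(u,x_1)Y_W(v,x_2))|_{x_1=\phi(x_2,x_0)}$. *)

From mathcomp Require Import all_boot all_order all_algebra.
From mathcomp Require Import complex.
From mathcomp Require Import Rstruct.
From mathcomp Require Import boolp classical_sets fsbigop.

Set Implicit Arguments.
Unset Strict Implicit.
Unset Printing Implicit Defensive.
Import Order.TTheory GRing.Theory Num.Theory.
Local Open Scope classical_set_scope.
Local Open Scope ring_scope.

Notation CC := (Rdefinitions.R[i]).

(* A one-variable formal series  sum_n f_n x^n  (n in Z) is  f : int -> T.  *)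
(* A two-variable formal series  sum_{k,n} f_{k,n} y^k x^n  is              *)
(*   f : int -> int -> T,  f k n = coefficient of y^k x^n.                  *)
(* For an element of C((x))[[z]] (resp. Hom(W,W((x2)))[[x0]]) the FIRST    *)
(* index is the power of the power-series variable z (resp. x0) and the     *)
(* second one the power of the Laurent variable x (resp. x2).               *)
(* A vertex operator Y(u,x)v = sum_n Y u v n x^n  (coefficient of x^n).     *)
(* Infinite sums are finitely-supported sums (fsbigop); in every place they *)
(* are used below the support is finite (truncation conditions).            *)

Definition natE {T : Type} (z : T) (f : nat -> T) (k : int) : T :=
  match k with Posz k' => f k' | Negz _ => z end.

Definition natE2 (p : nat -> nat -> CC) (m n : int) : CC :=
  match m, n with Posz a, Posz b => p a b | _, _ => 0 end.

Definition mul2 {W : lmodType CC} (f : int -> int -> CC) (g : int -> int -> W)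
  : int -> int -> W :=
  fun k n => \sum_(p \in [set: int * int]) (f p.1 p.2 *: g (k - p.1) (n - p.2)).

Definition one2 : int -> int -> CC := fun k n => ((k == 0) && (n == 0))%:R.
Definition xser2 : int -> int -> CC := fun k n => ((k == 0) && (n == 1))%:R.

(* phi(x,z) = sum_{k>=0} phi k . z^k, with phi k n = coefficient of z^k x^n *)
Definition phiE (phi : nat -> int -> CC) : int -> int -> CC :=
  fun k n => natE 0 (fun k' => phi k' n) k.

Definition phipow (phi : nat -> int -> CC) (m : nat) : int -> int -> CC :=
  iter m (mul2 (W := CC^o) (phiE phi)) one2.

Definition phid (phi : nat -> int -> CC) : int -> int -> CC :=
  fun k n => phiE phi k n - xser2 k n.
Definition dpow (phi : nat -> int -> CC) (j : nat) : int -> int -> CC :=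
  iter j (mul2 (W := CC^o) (phid phi)) one2.

(* the expansion of phi(x,z)^{-1} in C((x))[[z]] (valid when phi(x,0) = x):
   phi^{-1} = sum_{j>=0} (-1)^j x^{-j-1} (phi - x)^j ; since (phi - x)^j has
   z-order >= j, only j <= k contribute to the coefficient of z^k. *)
Definition phiinv (phi : nat -> int -> CC) : int -> int -> CC :=
  fun k n => natE 0 (fun k' =>
    \sum_(j < k'.+1) ((-1) ^+ j * dpow phi j k (n + (j.+1)%:Z))) k.

Definition phipowz (phi : nat -> int -> CC) (m : int) : int -> int -> CC :=
  match m with
  | Posz m' => phipow phi m'
  | Negz m' => iter m'.+1 (mul2 (W := CC^o) (phiinv phi)) one2
  end.

(* substitution x1 = phi(x2,x0) into F = sum_{m,l} F m l x1^m x2^l ;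
   result: coefficient of x0^k x2^n. *)
Definition subst (phi : nat -> int -> CC) {W : lmodType CC}
  (F : int -> int -> W) : int -> int -> W :=
  fun k n => \sum_(p \in [set: int * int])
               (phipowz phi p.1 k (n - p.2) *: F p.1 p.2).

Record associate (phi : nat -> int -> CC) : Prop := {
  assoc_laurent : forall k : nat, exists N : int, forall n, n < N -> phi k n = 0;
  assoc_init : forall n : int, phi 0%N n = (n == 1)%:R;
  (* phi(phi(x,x2),x0) = phi(x,x0+x2): coefficient of x0^a x2^j x^n *)
  assoc_comp : forall (a j : nat) (n : int),
    \sum_(m \in [set: int]) (phi a m * phipowz phi m j n)
      = 'C(a + j, a)%:R * phi (a + j)%N n }.

Definition gbinom (m : int) (i : nat) : CC :=
  (\prod_(j < i) ((m - (j : nat)%:Z)%:~R : CC)) / (i`!)%:R.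

Definition binom2 (l : nat) : int -> int -> CC :=
  fun a b => if (0 <= a) && (0 <= b) && (a + b == l%:Z)
             then ('C(l, `|a|%N))%:R else 0.

(* Y(u, x0 + x2) Y(v, x2) w, with (x0+x2)^m expanded in nonnegative powers
   of x2; coefficient of x0^a x2^b *)
Definition YYshift {V : lmodType CC} (Y : V -> V -> int -> V) (u v w : V)
  : int -> int -> V :=
  fun a b => \sum_(i \in [set: nat])
               (gbinom (a + i%:Z) i *: Y u (Y v w (b - i%:Z)) (a + i%:Z)).

Record nlva (V : lmodType CC) (Y : V -> V -> int -> V) (one : V) : Prop := {
  nlva_linl : forall (v : V) (n : int) (c : CC) (u1 u2 : V),
    Y (c *: u1 + u2) v n = c *: Y u1 v n + Y u2 v n;
  nlva_linr : forall (u : V) (n : int) (c : CC) (v1 v2 : V),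
    Y u (c *: v1 + v2) n = c *: Y u v1 n + Y u v2 n;
  nlva_trunc : forall u v : V, exists N : int, forall n, n < N -> Y u v n = 0;
  nlva_vac : forall (v : V) (n : int), Y one v n = if n == 0 then v else 0;
  nlva_create_neg : forall (v : V) (n : int), n < 0 -> Y v one n = 0;
  nlva_create_0 : forall v : V, Y v one 0 = v;
  nlva_wassoc : forall u v w : V, exists l : nat,
    mul2 (binom2 l) (YYshift Y u v w)
      = mul2 (binom2 l) (fun k n => Y (Y u v k) w n) }.

(* Y_W(u,x1) Y_W(v,x2) w ; coefficient of x1^m x2^l *)
Definition YYW {V W : lmodType CC} (YW : V -> W -> int -> W) (u v : V) (w : W)
  : int -> int -> W :=
  fun m l => YW u (YW v w l) m.

Definition in_hom2 {W : lmodType CC} (F : W -> int -> int -> W) : Prop :=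
  forall w : W, exists N : int, forall m n : int, (m < N \/ n < N) -> F w m n = 0.

Record phi_quasi_module (phi : nat -> int -> CC) (V : lmodType CC)
    (Y : V -> V -> int -> V) (one : V) (W : lmodType CC)
    (YW : V -> W -> int -> W) : Prop := {
  qm_linl : forall (w : W) (n : int) (c : CC) (u1 u2 : V),
    YW (c *: u1 + u2) w n = c *: YW u1 w n + YW u2 w n;
  qm_linr : forall (u : V) (n : int) (c : CC) (w1 w2 : W),
    YW u (c *: w1 + w2) n = c *: YW u w1 n + YW u w2 n;
  qm_trunc : forall (v : V) (w : W), exists N : int, forall n, n < N -> YW v w n = 0;
  qm_vac : forall (w : W) (n : int), YW one w n = if n == 0 then w else 0;
  qm_assoc : forall u v : V, exists p : nat -> nat -> CC,
    subst (W := CC^o) phi (natE2 p) <> (fun _ _ => 0) /\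
    in_hom2 (fun w => mul2 (natE2 p) (YYW YW u v w)) /\
    forall w : W,
      mul2 (subst (W := CC^o) phi (natE2 p)) (fun k n => YW (Y u v k) w n)
        = subst phi (mul2 (natE2 p) (YYW YW u v w)) }.

From mathcomp Require Import all_boot all_order all_algebra.
From mathcomp Require Import complex Rstruct.
From mathcomp Require Import boolp classical_sets fsbigop.
From mathcomp Require Import zify.

Set Implicit Arguments.
Unset Strict Implicit.
Unset Printing Implicit Defensive.
Import Order.TTheory GRing.Theory Num.Theory.
Local Open Scope classical_set_scope.
Local Open Scope ring_scope.

(* Let p be the series that the quasi-module axiom provides for u and v, and
   write X^phi for X(phi(x2,x0), x2).  Since phi(x,0) = x, phi(x2,x0) is
   invertible in C((x2))[[x0]], and the x2-order of the x0^k coefficient of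
   phi(x2,x0) is at least 1 + g(k) for a subadditive g; hence x1 = phi(x2,x0)
   is a well-defined multiplicative substitution on series supported in a
   quadrant.  With A = Y_W(Y(u,x0)v,x2)w and B = Y_W(u,x1)Y_W(v,x2)w,
     p^phi (q^phi A) = q^phi (p^phi A) = q^phi (p B)^phi = (q p B)^phi
                     = (p q B)^phi = p^phi (q B)^phi,
   and p^phi cancels, because series whose support is bounded below in the
   lexicographic sense have no zero divisors. *)

Section FiniteSupportSums.
Variables (T : choiceType) (V : zmodType).

Lemma fsbigT_seq (r : seq T) (F : T -> V) : uniq r ->
  (forall i, F i != 0 -> i \in r) ->
  \sum_(i \in [set: T]) F i = \sum_(i <- r) F i.
Proof.
move=> ur Fr; rewrite (fsbigE r) //.
  by apply: eq_bigl => i; rewrite in_setT.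
by move=> i _ ir; apply/eqP; apply: contraNT ir; apply: Fr.
Qed.

Lemma fsbig_neq0 (A : set T) (F : T -> V) :
  \sum_(i \in A) F i != 0 -> exists2 i, A i & F i != 0.
Proof. exact: (@fsbigN1 _ _ _ unit T A (fun _ => F) tt). Qed.

Lemma fsbigT1 (i0 : T) (F : T -> V) :
  (forall i, i != i0 -> F i = 0) -> \sum_(i \in [set: T]) F i = F i0.
Proof.
move=> F0; rewrite (@fsbigT_seq [:: i0]) ?big_seq1 // => i.
by apply: contraR; rewrite inE => /F0 ->.
Qed.

Lemma fsbigTD (r : seq T) (F G : T -> V) : uniq r ->
  (forall i, F i != 0 -> i \in r) -> (forall i, G i != 0 -> i \in r) ->
  \sum_(i \in [set: T]) (F i + G i) =
  \sum_(i \in [set: T]) F i + \sum_(i \in [set: T]) G i.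
Proof.
move=> ur Fr Gr; rewrite !(fsbigT_seq ur) ?big_split // => i.
apply: contraR => ir; move: (Fr i) (Gr i); rewrite (negbTE ir).
by move=> /contraFeq -> // /contraFeq -> //; rewrite addr0.
Qed.

Lemma fsbigTB (r : seq T) (F G : T -> V) : uniq r ->
  (forall i, F i != 0 -> i \in r) -> (forall i, G i != 0 -> i \in r) ->
  \sum_(i \in [set: T]) (F i - G i) =
  \sum_(i \in [set: T]) F i - \sum_(i \in [set: T]) G i.
Proof.
move=> ur Fr Gr; have Nr i : - G i != 0 -> i \in r by rewrite oppr_eq0; apply: Gr.
by rewrite (fsbigTD ur Fr Nr) !(fsbigT_seq ur) ?sumrN.
Qed.

End FiniteSupportSums.

Lemma exchange_fsbigT (I J : choiceType) (V : zmodType) (r : seq I) (s : seq J)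
  (F : I -> J -> V) : uniq r -> uniq s ->
  (forall i j, F i j != 0 -> i \in r /\ j \in s) ->
  \sum_(i \in [set: I]) \sum_(j \in [set: J]) F i j =
  \sum_(j \in [set: J]) \sum_(i \in [set: I]) F i j.
Proof.
move=> ur us Frs.
rewrite (fsbigT_seq ur); last by move=> i /fsbig_neq0 [j _ /Frs []].
under eq_bigr => i _ do
  rewrite (fsbigT_seq us (fun j Fij => proj2 (Frs i j Fij))).
rewrite exchange_big /= [RHS](fsbigT_seq us); last first.
  by move=> j /fsbig_neq0 [i _ /Frs []].
by apply: eq_bigr => j _; rewrite (fsbigT_seq ur) // => i /Frs [].
Qed.

Lemma fsbigT_sum_ord (T : choiceType) (V : zmodType) (K : nat)
  (F : 'I_K -> T -> V) :
  (forall j, exists2 r : seq T, uniq r & forall i, F j i != 0 -> i \in r) ->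
  \sum_(i \in [set: T]) \sum_(j < K) F j i =
  \sum_(j < K) \sum_(i \in [set: T]) F j i.
Proof.
move=> F_fin; have /choice [r rP] : forall j, exists r : seq T,
    forall i, F j i != 0 -> i \in r.
  by move=> j; have [r _ Fr] := F_fin j; exists r.
pose s := flatten [seq r j | j <- enum 'I_K].
have s_supp j i : F j i != 0 -> i \in undup s.
  move=> Fji; rewrite mem_undup; apply/flattenP; exists (r j); last exact: rP.
  by apply: map_f; rewrite mem_enum.
rewrite (fsbigT_seq (undup_uniq s)); last first.
  move=> i; apply: contraR => i_s; apply/eqP/big1 => j _; apply/eqP.
  by apply: contraNT i_s; apply: s_supp.
rewrite exchange_big; apply: eq_bigr => j _.
by rewrite (fsbigT_seq (undup_uniq s)) //; apply: s_supp.
Qed.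

Lemma finite_support_eq0 (I : choiceType) (A : set I) (U V : zmodType)
  (F : I -> U) (G : I -> V) : (forall i, (F i == 0) = (G i == 0)) ->
  finite_support 0 A F = finite_support 0 A G.
Proof.
move=> FG; rewrite /finite_support !unlock.
suff -> : F @^-1` [set~ 0] = G @^-1` [set~ 0] by [].
apply/funext => i; apply/propext; rewrite /preimage /setC /set1 /=.
by split=> nz /eqP e; apply: nz; apply/eqP; [rewrite FG | rewrite -FG].
Qed.

Section ScaleFiniteSupportSums.
Variables (K : fieldType) (V : lmodType K) (T : choiceType).

Lemma scaler_fsumr (A : set T) (a : K) (F : T -> V) :
  a *: \sum_(i \in A) F i = \sum_(i \in A) a *: F i.
Proof.
have [->|a0] := eqVneq a 0.
  by rewrite scale0r fsbig1 // => i _; rewrite scale0r.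
rewrite (@finite_support_eq0 _ _ _ _ (fun i => a *: F i) F) ?scaler_sumr //.
by move=> i; rewrite scaler_eq0 (negbTE a0).
Qed.

Lemma scaler_fsuml (A : set T) (v : V) (F : T -> K) :
  (\sum_(i \in A) F i) *: v = \sum_(i \in A) F i *: v.
Proof.
have [->|v0] := eqVneq v 0.
  by rewrite scaler0 fsbig1 // => i _; rewrite scaler0.
rewrite (@finite_support_eq0 _ _ _ _ (fun i => F i *: v) F) ?scaler_suml //.
by move=> i; rewrite scaler_eq0 (negbTE v0) orbF.
Qed.

End ScaleFiniteSupportSums.

Definition int_box (N : nat) : seq int :=
  [seq i%:Z - N%:Z | i <- iota 0 N.*2.+1].

Lemma mem_int_box N x : (x \in int_box N) = (`|x| <= N%:Z).
Proof.
apply/mapP/idP; [case=> i | move=> xN].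
  by rewrite mem_iota => /andP[_ iN] ->; lia.
by exists (absz (x + N%:Z)); [rewrite mem_iota|]; lia.
Qed.

Lemma int_box_uniq N : uniq (int_box N).
Proof. by rewrite map_inj_uniq ?iota_uniq // => i j; lia. Qed.

Definition pair_box (N : nat) : seq (int * int) :=
  [seq (x, y) | x <- int_box N, y <- int_box N].

Lemma mem_pair_box N p :
  (p \in pair_box N) = (`|p.1| <= N%:Z) && (`|p.2| <= N%:Z).
Proof.
case: p => x y; apply/allpairsP/andP => [[[a b] /=]|[xN yN]].
  by rewrite !mem_int_box => -[aN bN [-> ->]].
by exists (x, y); rewrite /= !mem_int_box.
Qed.

Lemma pair_box_uniq N : uniq (pair_box N).
Proof.
by apply: allpairs_uniq; rewrite ?int_box_uniq // => -[a b] [c d] _ _ [-> ->].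
Qed.

Lemma pair_box_mono N M p : (N <= M)%N -> p \in pair_box N -> p \in pair_box M.
Proof. by rewrite !mem_pair_box => NM /andP[? ?]; apply/andP; split; lia. Qed.

Definition box_lbound (lo : int -> int) (R : nat) : int :=
  - \sum_(i <- int_box R) `|lo i|.

Lemma box_lboundP lo R x : `|x| <= R%:Z -> box_lbound lo R <= lo x.
Proof.
move=> xR; have x_box : x \in int_box R by rewrite mem_int_box.
have : `|lo x| <= \sum_(i <- int_box R) `|lo i|.
  by rewrite (bigD1_seq x) ?int_box_uniq // lerDl sumr_ge0.
exact: lerNnormlW.
Qed.

(* The series with support in some [{k >= K, n >= lo k}]: this is the
   class of iterated Laurent series on which [mul2] is a well-defined,
   associative product. *)
Definition lower_bounded {T : zmodType} (f : int -> int -> T) :=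
  exists (K : int) (lo : int -> int),
    forall k n, f k n != 0 -> K <= k /\ lo k <= n.

Definition swap2 {T : Type} (f : int -> int -> T) : int -> int -> T :=
  fun k n => f n k.

Lemma mul2_supp_box (T1 T2 : zmodType) (f : int -> int -> T1)
  (g : int -> int -> T2) k n :
  lower_bounded f -> lower_bounded g -> exists N, forall p : int * int,
    f p.1 p.2 != 0 -> g (k - p.1) (n - p.2) != 0 -> p \in pair_box N.
Proof.
move=> [K1 [lo1 f_supp]] [K2 [lo2 g_supp]].
pose R := (absz K1 + absz K2 + absz k)%N.
exists (R + absz (box_lbound lo1 R) + absz (n - box_lbound lo2 R))%N.
move=> [a b] /= /f_supp [? ?] /g_supp [? ?].
have ? : box_lbound lo1 R <= lo1 a by apply: box_lboundP; lia.
have ? : box_lbound lo2 R <= lo2 (k - a) by apply: box_lboundP; lia.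
by rewrite mem_pair_box /=; apply/andP; split; lia.
Qed.

Lemma mul2_supp_box3 (T1 T2 T3 : zmodType) (f : int -> int -> T1)
  (g : int -> int -> T2) (h : int -> int -> T3) k n :
  lower_bounded f -> lower_bounded g -> lower_bounded h ->
  exists N, forall p q : int * int,
    f p.1 p.2 != 0 -> g q.1 q.2 != 0 -> h (k - p.1 - q.1) (n - p.2 - q.2) != 0 ->
    p \in pair_box N /\ (p.1 + q.1, p.2 + q.2) \in pair_box N.
Proof.
move=> [K1 [lo1 f_supp]] [K2 [lo2 g_supp]] [K3 [lo3 h_supp]].
pose R := (3 * (absz K1 + absz K2 + absz K3 + absz k))%N.
pose L1 := box_lbound lo1 R; pose L2 := box_lbound lo2 R.
pose L3 := box_lbound lo3 R.
exists (3 * (R + absz L1 + absz L2 + absz L3 + absz n))%N.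
move=> [a1 a2] [b1 b2] /= /f_supp [? ?] /g_supp [? ?] /h_supp [? ?].
have ? : L1 <= lo1 a1 by apply: box_lboundP; lia.
have ? : L2 <= lo2 b1 by apply: box_lboundP; lia.
have ? : L3 <= lo3 (k - a1 - b1) by apply: box_lboundP; lia.
by rewrite !mem_pair_box /=; split; apply/andP; split; lia.
Qed.

Lemma lower_bounded_add (T : zmodType) (f g : int -> int -> T) :
  lower_bounded f -> lower_bounded g -> lower_bounded (fun k n => f k n + g k n).
Proof.
move=> [K1 [lo1 f_supp]] [K2 [lo2 g_supp]].
exists (- (`|K1| + `|K2|)), (fun k => - (`|lo1 k| + `|lo2 k|)) => k n fg.
have [f0|/f_supp] := eqVneq (f k n) 0; last by lia.
by move: fg; rewrite f0 add0r => /g_supp; lia.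
Qed.

Lemma lower_bounded_opp (T : zmodType) (f : int -> int -> T) :
  lower_bounded f -> lower_bounded (fun k n => - f k n).
Proof.
by move=> [K [lo f_supp]]; exists K, lo => k n; rewrite oppr_eq0; apply: f_supp.
Qed.

Lemma lower_bounded_sub (T : zmodType) (f g : int -> int -> T) :
  lower_bounded f -> lower_bounded g -> lower_bounded (fun k n => f k n - g k n).
Proof. by move=> lf lg; apply: lower_bounded_add lf (lower_bounded_opp lg). Qed.

Section Mul2.
Variable W : lmodType CC.
Implicit Types (f g : int -> int -> CC) (h : int -> int -> W).

Lemma lower_bounded_mul2 f h :
  lower_bounded f -> lower_bounded h -> lower_bounded (mul2 f h).
Proof.
move=> [K1 [lo1 f_supp]] [K2 [lo2 h_supp]].
pose lo k := box_lbound lo1 (absz K1 + absz K2 + absz k)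
           + box_lbound lo2 (absz K1 + absz K2 + absz k).
exists (K1 + K2), lo => k n /fsbig_neq0 [[a b] _] /=.
rewrite scaler_eq0 negb_or => /andP[/f_supp [? ?] /h_supp [? ?]].
have : box_lbound lo1 (absz K1 + absz K2 + absz k) <= lo1 a.
  by apply: box_lboundP; lia.
have : box_lbound lo2 (absz K1 + absz K2 + absz k) <= lo2 (k - a).
  by apply: box_lboundP; lia.
by rewrite /lo; lia.
Qed.

Lemma mul2_term_box f h k n : lower_bounded f -> lower_bounded h ->
  exists N, forall M, (N <= M)%N -> forall p : int * int,
    f p.1 p.2 *: h (k - p.1) (n - p.2) != 0 -> p \in pair_box M.
Proof.
move=> lf lh; have [N fh_box] := mul2_supp_box k n lf lh.
exists N => M NM p; rewrite scaler_eq0 negb_or => /andP[fp hp].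
exact: pair_box_mono NM (fh_box p fp hp).
Qed.

Lemma mul2Dl f g h k n :
  lower_bounded f -> lower_bounded g -> lower_bounded h ->
  mul2 (fun a b => f a b + g a b) h k n = mul2 f h k n + mul2 g h k n.
Proof.
move=> lf lg lh; have [N1 box1] := mul2_term_box k n lf lh.
have [N2 box2] := mul2_term_box k n lg lh.
rewrite /mul2 -(fsbigTD (pair_box_uniq (maxn N1 N2))).
- by apply: eq_fsbigr => p _; rewrite scalerDl.
- by apply: box1; rewrite leq_maxl.
- by apply: box2; rewrite leq_maxr.
Qed.

Lemma mul2Br f h1 h2 k n :
  lower_bounded f -> lower_bounded h1 -> lower_bounded h2 ->
  mul2 f (fun a b => h1 a b - h2 a b) k n = mul2 f h1 k n - mul2 f h2 k n.
Proof.
move=> lf lh1 lh2; have [N1 box1] := mul2_term_box k n lf lh1.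
have [N2 box2] := mul2_term_box k n lf lh2.
rewrite /mul2 -(fsbigTB (pair_box_uniq (maxn N1 N2))).
- by apply: eq_fsbigr => p _; rewrite scalerBr.
- by apply: box1; rewrite leq_maxl.
- by apply: box2; rewrite leq_maxr.
Qed.

Lemma mul2A f g h : lower_bounded f -> lower_bounded g -> lower_bounded h ->
  mul2 f (mul2 g h) = mul2 (mul2 (W := CC^o) f g) h.
Proof.
move=> lf lg lh; apply/funext => k; apply/funext => n.
have [N fgh_box] := mul2_supp_box3 k n lf lg lh.
rewrite /mul2.
under eq_fsbigr => p _ do rewrite scaler_fsumr.
under [RHS]eq_fsbigr => s _ do rewrite scaler_fsuml.
rewrite [RHS](exchange_fsbigT (pair_box_uniq N) (pair_box_uniq N)); last first.
  move=> s p; rewrite -scalerA !scaler_eq0 !negb_or => /and3P[fp gsp hks].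
  have := fgh_box p (s.1 - p.1, s.2 - p.2) fp gsp.
  have -> : k - p.1 - (s.1 - p.1) = k - s.1 by lia.
  have -> : n - p.2 - (s.2 - p.2) = n - s.2 by lia.
  have -> : p.1 + (s.1 - p.1) = s.1 by lia.
  have -> : p.2 + (s.2 - p.2) = s.2 by lia.
  by case/(_ hks) => ->; case: s {gsp hks}.
apply: eq_fsbigr => p _; apply/esym.
rewrite (reindex_fsbigT (fun q : int * int => (p.1 + q.1, p.2 + q.2)));
  last first.
  by exists (fun q : int * int => (q.1 - p.1, q.2 - p.2)) => -[a b] /=;
    congr pair; lia.
apply: eq_fsbigr => q _ /=; rewrite scalerA.
have -> : p.1 + q.1 - p.1 = q.1 by lia.
have -> : p.2 + q.2 - p.2 = q.2 by lia.
by rewrite !opprD !addrA.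
Qed.

Lemma one2_mul2 h : mul2 one2 h = h.
Proof.
apply/funext => k; apply/funext => n; rewrite /mul2 (@fsbigT1 _ _ (0, 0)).
  by rewrite /one2 /= scale1r !subr0.
move=> [a b] ab0; rewrite /one2 /=.
suff -> : (a == 0) && (b == 0) = false by rewrite scale0r.
by apply: contraNF ab0 => /andP[/eqP -> /eqP ->].
Qed.

Lemma mul2_xser2 h k n : mul2 xser2 h k n = h k (n - 1).
Proof.
rewrite /mul2 (@fsbigT1 _ _ (0, 1)) /xser2 /=; first by rewrite scale1r subr0.
move=> [a b] ab01 /=; suff -> : (a == 0) && (b == 1) = false by rewrite scale0r.
by apply: contraNF ab01 => /andP[/eqP -> /eqP ->].
Qed.

Lemma swap2_mul2 f h : swap2 (mul2 f h) = mul2 (swap2 f) (swap2 h).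
Proof.
apply/funext => k; apply/funext => n; rewrite /swap2 /mul2.
rewrite (reindex_fsbigT (fun p : int * int => (p.2, p.1))) //.
by exists (fun p : int * int => (p.2, p.1)) => -[].
Qed.

End Mul2.

Lemma mul2C (f g : int -> int -> CC) :
  mul2 (W := CC^o) f g = mul2 (W := CC^o) g f.
Proof.
apply/funext => k; apply/funext => n; rewrite /mul2.
rewrite (reindex_fsbigT (fun p : int * int => (k - p.1, n - p.2))); last first.
  by exists (fun p : int * int => (k - p.1, n - p.2)) => -[a b] /=;
    rewrite !subKr.
by apply: eq_fsbigr => -[a b] _ /=; rewrite !subKr; apply: mulrC.
Qed.

Lemma mul2_one2 (f : int -> int -> CC) : mul2 (W := CC^o) f one2 = f.
Proof. by rewrite mul2C one2_mul2. Qed.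

Lemma swap2K (T : Type) : involutive (@swap2 T).
Proof. by []. Qed.

Section Mul2Comm.
Variable W : lmodType CC.
Implicit Types (f g : int -> int -> CC) (h : int -> int -> W).

Lemma mul2A_swap2 f g h :
  lower_bounded (swap2 f) -> lower_bounded (swap2 g) -> lower_bounded (swap2 h) ->
  mul2 f (mul2 g h) = mul2 (mul2 (W := CC^o) f g) h.
Proof.
move=> lf lg lh; apply: (inv_inj (@swap2K W)).
by rewrite !swap2_mul2 mul2A.
Qed.

Lemma mul2CA f g h : lower_bounded f -> lower_bounded g -> lower_bounded h ->
  mul2 f (mul2 g h) = mul2 g (mul2 f h).
Proof. by move=> lf lg lh; rewrite !mul2A // mul2C. Qed.

Lemma mul2CA_swap2 f g h :
  lower_bounded (swap2 f) -> lower_bounded (swap2 g) -> lower_bounded (swap2 h) ->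
  mul2 f (mul2 g h) = mul2 g (mul2 f h).
Proof. by move=> lf lg lh; rewrite !mul2A_swap2 // mul2C. Qed.

End Mul2Comm.

Lemma exists_least_int (P : int -> Prop) (K : int) :
  (forall k, P k -> K <= k) -> (exists k, P k) ->
  exists k0, P k0 /\ forall k, P k -> k0 <= k.
Proof.
move=> P_ge [k Pk].
have shift k' : P k' -> K + (absz (k' - K))%:Z = k' by move/P_ge; lia.
have ex : exists j : nat, `[< P (K + j%:Z) >].
  by exists (absz (k - K)); apply/asboolP; rewrite shift.
case: (ex_minnP ex) => j /asboolP Pj j_min.
exists (K + j%:Z); split => // k' Pk'.
have : (j <= absz (k' - K))%N by apply: j_min; apply/asboolP; rewrite shift.
by have := P_ge _ Pk'; lia.
Qed.

Lemma lower_bounded_lead (T : zmodType) (f : int -> int -> T) :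
  lower_bounded f -> f <> (fun _ _ => 0) ->
  exists k0 n0, f k0 n0 != 0 /\
    forall k n, f k n != 0 -> k0 <= k /\ (k = k0 -> n0 <= n).
Proof.
move=> [K [lo f_supp]] f_nz; have [k [n fkn]] : exists k n, f k n != 0.
  apply: contra_notP f_nz => no_nz; apply/funext => k; apply/funext => n.
  by apply/eqP/negPn/negP => fkn; apply: no_nz; exists k, n.
have [k0 [[n' fk0] k0_min]] := @exists_least_int (fun k => exists n, f k n != 0) K
  (fun k '(ex_intro n fkn) => proj1 (f_supp _ _ fkn))
  (ex_intro _ k (ex_intro _ n fkn)).
have [n0 [fk0n0 n0_min]] := @exists_least_int (fun n => f k0 n != 0) (lo k0)
  (fun n fk0n => proj2 (f_supp _ _ fk0n)) (ex_intro _ n' fk0).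
exists k0, n0; split=> // k1 n1 fk1n1; split; first by apply: k0_min; exists n1.
by move=> e; apply: n0_min; rewrite -e.
Qed.

(* The product of the lexicographically leading terms is the leading term of
   the product. *)
Lemma mul2_eq0 (W : lmodType CC) (f : int -> int -> CC) (h : int -> int -> W) :
  lower_bounded f -> lower_bounded h -> f <> (fun _ _ => 0) ->
  mul2 f h = (fun _ _ => 0) -> h = (fun _ _ => 0).
Proof.
move=> lf lh f_nz fh0; have [//|h_nz] := pselect (h = (fun _ _ => 0)); exfalso.
have [k1 [n1 [f1 f_lead]]] := lower_bounded_lead lf f_nz.
have [k0 [n0 [h0 h_lead]]] := lower_bounded_lead lh h_nz.
have := congr1 (fun F => F (k1 + k0) (n1 + n0)) fh0.
rewrite /mul2 (@fsbigT1 _ _ (k1, n1)) /=.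
  rewrite (addrC k1) (addrC n1) !addrK => /eqP.
  by rewrite scaler_eq0 (negbTE f1) (negbTE h0).
move=> [a b] ab1 /=; apply/eqP; rewrite scaler_eq0; apply/negPn/negP.
rewrite negb_or => /andP[fab hab].
have [? a_k1] := f_lead _ _ fab; have [? a_k0] := h_lead _ _ hab.
have ea : a = k1 by lia.
have := a_k1 ea; have : k1 + k0 - a = k0 by lia.
move=> /a_k0 ? ?; have eb : b = n1 by lia.
by move: ab1; rewrite ea eb eqxx.
Qed.

Lemma mul2I (W : lmodType CC) (f : int -> int -> CC) (h1 h2 : int -> int -> W) :
  lower_bounded f -> lower_bounded h1 -> lower_bounded h2 ->
  f <> (fun _ _ => 0) -> mul2 f h1 = mul2 f h2 -> h1 = h2.
Proof.
move=> lf lh1 lh2 f_nz fh12.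
have h12_0 : (fun a b => h1 a b - h2 a b) = (fun _ _ => 0).
  apply: (mul2_eq0 lf (lower_bounded_sub lh1 lh2) f_nz).
  by apply/funext => a; apply/funext => b; rewrite mul2Br // fh12 subrr.
apply/funext => k; apply/funext => n; apply/eqP; rewrite -subr_eq0.
by have /eqP := congr1 (fun F => F k n) h12_0.
Qed.

Section SupportCone.
Variable g : int -> int.
Hypothesis g0 : g 0 = 0.
Hypothesis gD : forall a b, 0 <= a -> 0 <= b -> g (a + b) <= g a + g b.

Definition supp_cone (e o : int) (f : int -> int -> CC) :=
  forall k n, f k n != 0 -> o <= k /\ e + g k <= n.

Lemma supp_cone_lower_bounded e o f : supp_cone e o f -> lower_bounded f.
Proof. by move=> f_cone; exists o, (fun k => e + g k). Qed.

Lemma supp_cone_mul2 e1 o1 e2 o2 f1 f2 : 0 <= o1 -> 0 <= o2 ->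
  supp_cone e1 o1 f1 -> supp_cone e2 o2 f2 ->
  supp_cone (e1 + e2) (o1 + o2) (mul2 (W := CC^o) f1 f2).
Proof.
clear g0; move=> o1_ge0 o2_ge0 f1_cone f2_cone k n /fsbig_neq0 [[a b] _] /=.
rewrite scaler_eq0 negb_or => /andP[/f1_cone [? ?] /f2_cone [? ?]].
have := gD (a := a) (b := k - a); rewrite subrKC; lia.
Qed.

Lemma supp_cone_one2 : supp_cone 0 0 one2.
Proof.
move=> k n; rewrite /one2.
by have [->|_] := eqVneq k 0; have [->|_] := eqVneq n 0; rewrite ?g0 ?eqxx.
Qed.

Lemma supp_cone_xser2 : supp_cone 1 0 xser2.
Proof.
move=> k n; rewrite /xser2.
by have [->|_] := eqVneq k 0; have [->|_] := eqVneq n 1; rewrite ?g0 ?eqxx.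
Qed.

Lemma supp_cone_iter e o f m : 0 <= o -> supp_cone e o f ->
  supp_cone (e * m%:Z) (o * m%:Z) (iter m (mul2 (W := CC^o) f) one2).
Proof.
move=> o_ge0 f_cone; elim: m => [|m IH].
  by rewrite !mulr0; apply: supp_cone_one2.
rewrite !intS !mulrDr !mulr1 /=.
by apply: supp_cone_mul2 => //; apply: mulr_ge0.
Qed.

End SupportCone.

Lemma leq_sum_prefix (F : nat -> nat) a b :
  (a <= b)%N -> (\sum_(i < a) F i <= \sum_(i < b) F i)%N.
Proof.
move=> ab; rewrite -!(big_mkord xpredT) (big_cat_nat (leq0n a) ab) /=.
exact: leq_addr.
Qed.

(* When [L k] is a lower bound for the x-order of the z^k coefficient of phi,
   [- k S(k)] with [S(k) = \sum_(i <= k) |L i - 1|] is the [g] of the proof: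
   [S] is nondecreasing, so [k S(k)] is superadditive, and [S(k) >= |L k - 1|]. *)
Definition order_bound (L : nat -> int) (k : int) : int :=
  - ((absz k * \sum_(i < (absz k).+1) absz (L i - 1))%N)%:Z.

Lemma order_bound0 L : order_bound L 0 = 0.
Proof. by []. Qed.

Lemma order_boundD L a b : 0 <= a -> 0 <= b ->
  order_bound L (a + b) <= order_bound L a + order_bound L b.
Proof.
move=> a0 b0; rewrite /order_bound.
have -> : absz (a + b) = (absz a + absz b)%N by lia.
set S := fun m => (\sum_(i < m.+1) absz (L i - 1))%N.
have S_mono m m' : (m <= m')%N -> (S m <= S m')%N.
  by move=> mm'; rewrite /S; apply: (leq_sum_prefix (fun i => absz (L i - 1))).
have : (absz a * S (absz a) + absz b * S (absz b)
         <= (absz a + absz b) * S (absz a + absz b))%N.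
  by rewrite mulnDl leq_add // leq_mul // S_mono // ?leq_addr ?leq_addl.
rewrite /S; lia.
Qed.

Lemma order_boundP L (k : nat) : order_bound L k.+1 <= L k.+1 - 1.
Proof.
rewrite /order_bound /=.
have : (absz (L k.+1 - 1) <= \sum_(i < k.+2) absz (L i - 1))%N.
  by rewrite big_ord_recr /= leq_addl.
set S := (\sum_(i < k.+2) _)%N => LS.
have : (S <= k.+1 * S)%N by rewrite leq_pmull.
lia.
Qed.

Lemma exists_order_bound (phi : nat -> int -> CC) :
  (forall k : nat, exists N : int, forall n, n < N -> phi k n = 0) ->
  (forall n : int, phi 0%N n = (n == 1)%:R) ->
  exists g : int -> int, [/\ g 0 = 0,
    forall a b, 0 <= a -> 0 <= b -> g (a + b) <= g a + g b &
    supp_cone g 1 0 (phiE phi)].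
Proof.
move=> /choice [L phiL] phi_init; exists (order_bound L); split.
- exact: order_bound0.
- exact: order_boundD.
case=> [[|k]|k] n /=; rewrite /phiE /= ?eqxx // => phi_nz; split => //.
  move: phi_nz; rewrite phi_init order_bound0.
  by case: (n =P 1) => [->|_] //; rewrite eqxx.
have := order_boundP L k; suff : L k.+1 <= n by lia.
by rewrite leNgt; apply: contraNN phi_nz => /phiL ->.
Qed.

Section PhiPowers.
Variable phi : nat -> int -> CC.
Hypothesis phi_init : forall n : int, phi 0%N n = (n == 1)%:R.
Variable g : int -> int.
Hypothesis g0 : g 0 = 0.
Hypothesis gD : forall a b, 0 <= a -> 0 <= b -> g (a + b) <= g a + g b.
Hypothesis phi_cone : supp_cone g 1 0 (phiE phi).

Lemma supp_cone_phipow m : supp_cone g m%:Z 0 (phipow phi m).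
Proof.
by have := supp_cone_iter g0 gD (m := m) (lexx 0) phi_cone; rewrite mul1r mul0r.
Qed.

Lemma supp_cone_phid : supp_cone g 1 1 (phid phi).
Proof.
clear g0; move=> k n; rewrite /phid.
have [->|k_nz] := eqVneq k 0.
  by rewrite /phiE /xser2 /= phi_init subrr eqxx.
rewrite /xser2 (negbTE k_nz) subr0 => /phi_cone [? ?]; lia.
Qed.

Lemma supp_cone_dpow j : supp_cone g j%:Z j%:Z (dpow phi j).
Proof.
by have := supp_cone_iter g0 gD (m := j) ler01 supp_cone_phid; rewrite !mul1r.
Qed.

Lemma dpow_small j k n : k < j%:Z -> dpow phi j k n = 0.
Proof.
move=> kj; apply/eqP; apply: contraTT kj => dpow_nz.
by have [? _] := supp_cone_dpow dpow_nz; lia.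
Qed.

Lemma supp_cone_phiinv : supp_cone g (-1) 0 (phiinv phi).
Proof.
move=> [k|k] n; rewrite /phiinv /= ?eqxx // => sum_nz; split=> //.
rewrite leNgt; apply: contraNN sum_nz => n_small; apply/eqP/big1 => j _.
suff -> : dpow phi j k (n + (j.+1)%:Z) = 0 by rewrite mulr0.
apply: contraTeq n_small => dpow_nz.
by have [_ ?] := supp_cone_dpow dpow_nz; lia.
Qed.

Lemma supp_cone_phipowz m : supp_cone g m 0 (phipowz phi m).
Proof.
case: m => [m|m]; first exact: supp_cone_phipow.
have := supp_cone_iter g0 gD (m := m.+1) (lexx 0) supp_cone_phiinv.
by rewrite mul0r NegzE mulN1r.
Qed.

Lemma phiinv_ext (M : nat) k n : k <= M%:Z ->
  phiinv phi k n = \sum_(j < M.+1) (-1) ^+ j * dpow phi j k (n + (j.+1)%:Z).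
Proof.
rewrite /phiinv; case: k => [k|k] /= kM; last first.
  by apply/esym/big1 => j _; rewrite dpow_small ?mulr0.
rewrite (big_ord_widen M.+1 (fun j => (-1) ^+ j * dpow phi j k (n + (j.+1)%:Z)));
  last by lia.
rewrite big_mkcond /=; apply: eq_bigr => j _; case: ifP => // jk.
by rewrite dpow_small ?mulr0 //; lia.
Qed.

Lemma mul2_phid_phiinv (K : nat) n :
  mul2 (W := CC^o) (phid phi) (phiinv phi) K n =
  - \sum_(j < K.+1) (-1) ^+ j.+1 * dpow phi j.+1 K (n + (j.+1)%:Z).
Proof.
rewrite /mul2; transitivity (\sum_(p \in [set: int * int]) \sum_(j < K.+1)
   ((-1) ^+ j * (phid phi p.1 p.2 *
                 dpow phi j (K%:Z - p.1) (n + (j.+1)%:Z - p.2)))).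
  apply: eq_fsbigr => -[a b] _ /=.
  have [->|phid_nz] := eqVneq (phid phi a b) 0.
    by rewrite scale0r big1 // => j _; rewrite mul0r mulr0.
  have [a_ge1 _] := supp_cone_phid phid_nz.
  rewrite (@phiinv_ext K); last by lia.
  rewrite scaler_sumr; apply: eq_bigr => j _ /=.
  by rewrite mulrCA addrAC.
rewrite fsbigT_sum_ord; last first.
  move=> j; have [N box] := mul2_supp_box K (n + (j.+1)%:Z)
    (supp_cone_lower_bounded supp_cone_phid)
    (supp_cone_lower_bounded (@supp_cone_dpow j)).
  exists (pair_box N); first exact: pair_box_uniq.
  by move=> p; rewrite !mulf_eq0 !negb_or => /and3P[_ /box]; apply.
rewrite -sumrN; apply: eq_bigr => j _.
by rewrite -mulr_fsumr exprS mulN1r !mulNr opprK.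
Qed.

(* Writing phi = x + d, the product x phi^-1 + d phi^-1 telescopes. *)
Lemma phiE_mul2_phiinv : mul2 (W := CC^o) (phiE phi) (phiinv phi) = one2.
Proof.
have -> : phiE phi = fun a b => xser2 a b + phid phi a b.
  by apply/funext => a; apply/funext => b; rewrite /phid addrC subrK.
apply/funext => k; apply/funext => n.
rewrite mul2Dl ?mul2_xser2;
  do ?[exact: supp_cone_lower_bounded (supp_cone_xser2 g0)
     | exact: supp_cone_lower_bounded supp_cone_phid
     | exact: supp_cone_lower_bounded supp_cone_phiinv].
case: k => [K|K]; last first.
  have prod_cone :=
    supp_cone_mul2 gD ler01 (lexx 0) supp_cone_phid supp_cone_phiinv.
  rewrite /one2 /phiinv /= add0r; apply/eqP; apply: contraTT isT => nz.
  by have [? _] := prod_cone _ _ nz.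
pose t j := (-1) ^+ j * dpow phi j K (n + j%:Z).
have -> : phiinv phi K (n - 1) = \sum_(j < K.+1) t j.
  by apply: eq_bigr => j _; rewrite /t intS addrA subrK.
rewrite mul2_phid_phiinv big_ord_recl [X in _ - X]big_ord_recr /=.
have -> : \sum_(i < K) t (bump 0 i) = \sum_(i < K) t i.+1 by [].
have t_last : t K.+1 = 0 by rewrite /t dpow_small ?mulr0 // ltz_nat.
by rewrite addrKA -[X in _ - X]/(t K.+1) t_last subr0 /t expr0 mul1r addr0.
Qed.

Lemma phipowzS m :
  phipowz phi (m + 1) = mul2 (W := CC^o) (phiE phi) (phipowz phi m).
Proof.
have lb_phi := supp_cone_lower_bounded phi_cone.
have lb_inv := supp_cone_lower_bounded supp_cone_phiinv.
case: m => [m|[|m]].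
- by rewrite addrC -intS.
- by rewrite /phipowz /= mul2_one2 phiE_mul2_phiinv.
- have -> : Negz m.+1 + 1 = Negz m by rewrite !NegzE; lia.
  rewrite /phipowz iterS mul2A ?phiE_mul2_phiinv ?one2_mul2 //.
  exact: supp_cone_lower_bounded (@supp_cone_phipowz (Negz m)).
Qed.

Lemma phipowzD (a : nat) m :
  phipowz phi (a%:Z + m) = mul2 (W := CC^o) (phipow phi a) (phipowz phi m).
Proof.
elim: a => [|a IH]; first by rewrite add0r one2_mul2.
rewrite intS -addrA addrC phipowzS IH mul2A //.
- exact: supp_cone_lower_bounded phi_cone.
- exact: supp_cone_lower_bounded (@supp_cone_phipow a).
- exact: supp_cone_lower_bounded (@supp_cone_phipowz m).
Qed.

End PhiPowers.

Definition supp_quadrant {T : zmodType} (N : int) (F : int -> int -> T) :=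
  forall m l, m < N \/ l < N -> F m l = 0.

Lemma natE2_neq0 (s : nat -> nat -> CC) a b :
  natE2 s a b != 0 -> 0 <= a /\ 0 <= b.
Proof. by case: a => [a|a]; case: b => [b|b] /=; rewrite ?eqxx. Qed.

Lemma supp_quadrant_natE2 (s : nat -> nat -> CC) : supp_quadrant 0 (natE2 s).
Proof. by move=> [a|a] [b|b] //=; rewrite !ltz_nat ltn0 => -[]. Qed.

Lemma lower_bounded_swap2_natE2 (s : nat -> nat -> CC) :
  lower_bounded (swap2 (natE2 s)).
Proof. by exists 0, (fun _ => 0) => k n /natE2_neq0 []. Qed.

Section Substitution.
Variable phi : nat -> int -> CC.
Hypothesis phi_init : forall n : int, phi 0%N n = (n == 1)%:R.
Variable g : int -> int.
Hypothesis g0 : g 0 = 0.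
Hypothesis gD : forall a b, 0 <= a -> 0 <= b -> g (a + b) <= g a + g b.
Hypothesis phi_cone : supp_cone g 1 0 (phiE phi).

(* The image [phi(x2,x0)^m x2^l] of the monomial [x1^m x2^l] under [subst]. *)
Definition phi_monomial (m l : int) : int -> int -> CC :=
  fun k n => phipowz phi m k (n - l).

Lemma supp_cone_phi_monomial m l : supp_cone g (m + l) 0 (phi_monomial m l).
Proof.
move=> k n /(supp_cone_phipowz phi_init g0 gD phi_cone) [? ?]; split=> //; lia.
Qed.

Lemma phi_monomialD (a : nat) b m l :
  phi_monomial (a%:Z + m) (b + l) =
  mul2 (W := CC^o) (phi_monomial a b) (phi_monomial m l).
Proof.
apply/funext => k; apply/funext => n.
rewrite /phi_monomial (phipowzD phi_init g0 gD phi_cone) /mul2.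
rewrite [RHS](reindex_fsbigT (fun p : int * int => (p.1, p.2 + b))); last first.
  by exists (fun p : int * int => (p.1, p.2 - b)) => -[x y] /=;
    rewrite ?addrK ?subrK.
apply: eq_fsbigr => -[x y] _ /=.
by rewrite addrK; congr (_ *: phipowz _ _ _ _); lia.
Qed.

Lemma substE (W : lmodType CC) (F : int -> int -> W) k n :
  subst phi F k n =
  \sum_(p \in [set: int * int]) phi_monomial p.1 p.2 k n *: F p.1 p.2.
Proof. by []. Qed.

Lemma lower_bounded_subst (W : lmodType CC) (F : int -> int -> W) N :
  supp_quadrant N F -> lower_bounded (subst phi F).
Proof.
move=> F_supp; exists 0, (fun k => 2 * N + g k) => k n.
rewrite substE => /fsbig_neq0 [[m l] _] /=.
rewrite scaler_eq0 negb_or => /andP[/supp_cone_phi_monomial [? ?] F_nz].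
have : ~ (m < N \/ l < N) by move=> /F_supp /eqP; rewrite (negbTE F_nz).
lia.
Qed.

Section SubstMul2.
Variables (W : lmodType CC) (s : nat -> nat -> CC).
Variables (F : int -> int -> W) (N : int).
Hypothesis F_supp : supp_quadrant N F.
Variables k n : int.

(* Both sides of [substM] expand to the triple sum of this summand, where [a]
   and [nu] index the monomials of [natE2 s] and [F], and [c] splits the
   product of their images. *)
Definition subst_mul2_summand (a nu c : int * int) : W :=
  (natE2 s a.1 a.2 * (phi_monomial a.1 a.2 c.1 c.2 *
     phi_monomial nu.1 nu.2 (k - c.1) (n - c.2))) *: F nu.1 nu.2.

Lemma subst_mul2_expand : subst phi (mul2 (natE2 s) F) k n =
  \sum_(a \in [set: int * int]) \sum_(nu \in [set: int * int])
    \sum_(c \in [set: int * int]) subst_mul2_summand a nu c.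
Proof.
rewrite substE /mul2; under eq_fsbigr => mu _ do rewrite scaler_fsumr.
pose R := (2 * (absz N + absz (n - g k - N)%R))%N.
rewrite (exchange_fsbigT (pair_box_uniq R) (pair_box_uniq R)); last first.
  move=> [m1 m2] [a1 a2] /=; rewrite !scaler_eq0 !negb_or.
  move=> /and3P[mon_nz s_nz F_nz].
  have [_ ?] := supp_cone_phi_monomial mon_nz; have [? ?] := natE2_neq0 s_nz.
  have ? : ~ (m1 - a1 < N \/ m2 - a2 < N).
    by move=> /F_supp /eqP; rewrite (negbTE F_nz).
  by rewrite !mem_pair_box /R /=; split; apply/andP; split; lia.
apply: eq_fsbigr => -[[a1|a1] a2] _; last first.
  rewrite fsbig1 => [|mu _]; last by rewrite /= scale0r scaler0.
  apply/esym/fsbig1 => nu _; apply/fsbig1 => c _.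
  by rewrite /subst_mul2_summand /= mul0r scale0r.
rewrite (reindex_fsbigT (fun nu : int * int => (a1%:Z + nu.1, a2 + nu.2)));
  last first.
  by exists (fun p : int * int => (p.1 - a1%:Z, p.2 - a2)) => -[x y] /=;
    congr pair; lia.
apply: eq_fsbigr => nu _ /=; rewrite (addrC a1%:Z) (addrC a2) !addrK.
rewrite scalerA (addrC nu.1) (addrC nu.2) phi_monomialD.
rewrite /mul2 mulr_fsuml scaler_fsuml; apply: eq_fsbigr => c _.
by rewrite mulrC.
Qed.

Lemma mul2_subst_expand :
  mul2 (subst (W := CC^o) phi (natE2 s)) (subst phi F) k n =
  \sum_(a \in [set: int * int]) \sum_(nu \in [set: int * int])
    \sum_(c \in [set: int * int]) subst_mul2_summand a nu c.
Proof.
transitivity (\sum_(c \in [set: int * int]) \sum_(a \in [set: int * int])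
                \sum_(nu \in [set: int * int]) subst_mul2_summand a nu c).
  rewrite /mul2; apply: eq_fsbigr => c _; rewrite !substE scaler_fsuml.
  apply: eq_fsbigr => a _; rewrite scaler_fsumr; apply: eq_fsbigr => nu _.
  by rewrite scalerA /subst_mul2_summand; congr (_ *: _); rewrite mulrCA mulrA.
pose G := box_lbound g (absz k).
pose R := (4 * (absz k + absz N + absz n + absz G))%N.
have summand_box c a nu : subst_mul2_summand a nu c != 0 ->
    [/\ c \in pair_box R, a \in pair_box R & nu \in pair_box R].
  case: c a nu => [c1 c2] [a1 a2] [nu1 nu2].
  rewrite /subst_mul2_summand scaler_eq0 !mulf_eq0 !negb_or /=.
  move=> /andP[/and3P[s_nz /supp_cone_phi_monomial [? ?]
    /supp_cone_phi_monomial [? ?]] F_nz].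
  have [? ?] := natE2_neq0 s_nz.
  have ? : ~ (nu1 < N \/ nu2 < N).
    by move=> /F_supp /eqP; rewrite (negbTE F_nz).
  have ? : G <= g c1 by apply: box_lboundP; lia.
  have ? : G <= g (k - c1) by apply: box_lboundP; lia.
  by rewrite !mem_pair_box /R /=; split; apply/andP; split; lia.
rewrite (exchange_fsbigT (pair_box_uniq R) (pair_box_uniq R)); last first.
  by move=> c a /fsbig_neq0 [nu _ /summand_box []].
apply: eq_fsbigr => a _.
rewrite (exchange_fsbigT (pair_box_uniq R) (pair_box_uniq R)) //.
by move=> c nu /summand_box [].
Qed.

End SubstMul2.

Lemma substM (W : lmodType CC) (s : nat -> nat -> CC) (F : int -> int -> W) N :
  supp_quadrant N F ->
  subst phi (mul2 (natE2 s) F) =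
  mul2 (subst (W := CC^o) phi (natE2 s)) (subst phi F).
Proof.
move=> F_supp; apply/funext => k; apply/funext => n.
by rewrite (subst_mul2_expand s F_supp) (mul2_subst_expand s F_supp).
Qed.

Lemma mul2_subst_transfer (W : lmodType CC) (p q : nat -> nat -> CC)
    (A F : int -> int -> W) (Np Nq : int) :
  lower_bounded A -> lower_bounded (swap2 F) ->
  supp_quadrant Np (mul2 (natE2 p) F) -> supp_quadrant Nq (mul2 (natE2 q) F) ->
  subst (W := CC^o) phi (natE2 p) <> (fun _ _ => 0) ->
  mul2 (subst (W := CC^o) phi (natE2 p)) A = subst phi (mul2 (natE2 p) F) ->
  mul2 (subst (W := CC^o) phi (natE2 q)) A = subst phi (mul2 (natE2 q) F).
Proof.
move=> lb_A lb_F p_supp q_supp p_nz p_rel.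
have lb_subst s : lower_bounded (subst (W := CC^o) phi (natE2 s)).
  exact: lower_bounded_subst (supp_quadrant_natE2 s).
apply: (mul2I (lb_subst p)) p_nz _.
- exact: lower_bounded_mul2 (lb_subst q) lb_A.
- exact: lower_bounded_subst q_supp.
rewrite (mul2CA (lb_subst p) (lb_subst q) lb_A) p_rel -(substM _ p_supp).
have lb_swap := lower_bounded_swap2_natE2.
rewrite (mul2CA_swap2 (lb_swap q) (lb_swap p) lb_F).
exact: substM q_supp.
Qed.

End Substitution.

Section QuasiModule.
Variables (phi : nat -> int -> CC) (V : lmodType CC) (Y : V -> V -> int -> V).
Variables (one : V) (W : lmodType CC) (YW : V -> W -> int -> W).
Hypothesis W_mod : phi_quasi_module phi Y one YW.

Lemma quasi_module_YW0l w n : YW 0 w n = 0.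
Proof.
have := qm_linl W_mod w n 1 0 0; rewrite scaler0 addr0 scale1r => /esym.
by move/eqP; rewrite -subr_eq0 addrK => /eqP.
Qed.

Lemma quasi_module_YW0r u n : YW u 0 n = 0.
Proof.
have := qm_linr W_mod u n 1 0 0; rewrite scaler0 addr0 scale1r => /esym.
by move/eqP; rewrite -subr_eq0 addrK => /eqP.
Qed.

Lemma lower_bounded_YW_Y (u v : V) (w : W) : nlva Y one ->
  lower_bounded (fun k n => YW (Y u v k) w n).
Proof.
move=> V_nlva; have [K Y_trunc] := nlva_trunc V_nlva u v.
have /choice [lo YW_trunc] := fun k => qm_trunc W_mod (Y u v k) w.
exists K, lo => k n YW_nz; rewrite !leNgt; split; apply/negP.
  by move/Y_trunc => Y0; move: YW_nz; rewrite Y0 quasi_module_YW0l eqxx.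
by move/YW_trunc => YW0; move: YW_nz; rewrite YW0 eqxx.
Qed.

Lemma lower_bounded_swap2_YYW (u v : V) (w : W) :
  lower_bounded (swap2 (YYW YW u v w)).
Proof.
have [K YWv_trunc] := qm_trunc W_mod v w.
have /choice [lo YWu_trunc] := fun l => qm_trunc W_mod u (YW v w l).
exists K, lo => l m YY_nz; rewrite !leNgt; split; apply/negP.
  move/YWv_trunc => YW0; move: YY_nz.
  by rewrite /swap2 /YYW YW0 quasi_module_YW0r eqxx.
by move/YWu_trunc => YW0; move: YY_nz; rewrite /swap2 /YYW YW0 eqxx.
Qed.

End QuasiModule.

Theorem lemma3p6 (phi : nat -> int -> CC) (V : lmodType CC)
  (Y : V -> V -> int -> V) (one : V) (W : lmodType CC)
  (YW : V -> W -> int -> W) :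
  associate phi -> nlva Y one -> phi_quasi_module phi Y one YW ->
  forall (u v : V) (q : nat -> nat -> CC),
    in_hom2 (fun w => mul2 (natE2 q) (YYW YW u v w)) ->
    forall w : W,
      mul2 (subst (W := CC^o) phi (natE2 q)) (fun k n => YW (Y u v k) w n)
        = subst phi (mul2 (natE2 q) (YYW YW u v w)).
Proof.
move=> phi_assoc V_nlva W_mod u v q q_hom w.
have [g [g0 gD phi_cone]] :=
  exists_order_bound (assoc_laurent phi_assoc) (assoc_init phi_assoc).
have [p [p_nz [p_hom p_assoc]]] := qm_assoc W_mod u v.
have [Np p_supp] := p_hom w; have [Nq q_supp] := q_hom w.
apply: (mul2_subst_transfer (assoc_init phi_assoc) g0 gD phi_cone _ _
          p_supp q_supp p_nz (p_assoc w)).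
- exact: lower_bounded_YW_Y W_mod u v w V_nlva.
- exact: lower_bounded_swap2_YYW W_mod u v w.
Qed.
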